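(* Let $\mathfrak{H}$ be a Euclidean space and let $(\mathcal{X},\mathsf{S},\gamma,(\Lambda_{a})_{a\in\mathcal{A}})$ be a spectral decomposition system for $\mathfrak{H}$ such that the set $\{\Lambda_a\}_{a\in\mathcal{A}}$ is closed in $\mathscr{L}(\mathcal{X},\mathfrak{H})$. Let $\varphi\colon\mathcal{X}\to[-\infty,+\infty]$ be $\mathsf{S}$-invariant, let $x,y\in\mathcal{X}$, and let $a\in\mathcal{A}$. Then: (i) $y\in\partial_{\mathsf{F}}\varphi(x)$ if and only if $\Lambda_a y\in\partial_{\mathsf{F}}(\varphi\circ\gamma)(\Lambda_a x)$; (ii) if $y\in\partial_{\mathsf{L}}\varphi(x)$, then $\Lambda_a y\in\partial_{\mathsf{L}}(\varphi\circ\gamma)(\Lambda_a x)$.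
   Context: A Euclidean space is a finite-dimensional real Hilbert space; $\mathscr{L}(\mathcal{X},\mathfrak{H})$ carries the operator-norm topology. A spectral decomposition system for a Euclidean space $\mathfrak{H}$ is a tuple $(\mathcal{X},\mathsf{S},\gamma,(\Lambda_a)_{a\in\mathcal{A}})$ where $\mathcal{X}$ is a Euclidean space, $\mathsf{S}$ is a group acting on $\mathcal{X}$ such that each map $x\mapsto \mathsf{s}\cdot x$ is a linear isometry, $\gamma\colon\mathfrak{H}\to\mathcal{X}$ is a mapping, and each $\Lambda_a\colon\mathcal{X}\to\mathfrak{H}$ is a linear isometry, such that: [A] there exists a mapping $\tau\colon\mathcal{X}\to\mathcal{X}$ with $\tau(\mathsf{s}\cdot x)=\tau(x)$ for all $\mathsf{s},x$, $\tau(x)\in\mathsf{S}\cdot x$ for all $x$, and $\gamma\circ\Lambda_a=\tau$ for all $a\in\mathcal{A}$; [B] for every $X\in\mathfrak{H}$ there exists $a\in\mathcal{A}$ with $X=\Lambda_a\gamma(X)$; [C] $\langle X,Y\rangle\le\langle\gamma(X),\gamma(Y)\rangle$ for all $X,Y\in\mathfrak{H}$. A function $\varphi$ on $\mathcal{X}$ is $\mathsf{S}$-invariant if $\varphi(\mathsf{s}\cdot x)=\varphi(x)$ for all $\mathsf{s},x$. For $f\colon\mathcal{H}\to[-\infty,+\infty]$: $\partial_{\mathsf{F}}f(x)=\{y:\liminf_{z\to x,z\ne x}(f(z)-f(x)-\langle z-x,y\rangle)/\|z-x\|\ge0\}$ if $f(x)\in\mathbb{R}$, $\varnothing$ otherwise;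 $\partial_{\mathsf{L}}f(x)$, for $f(x)\in\mathbb{R}$, is the set of $y$ for which there exist $x_n\to x$ with $f(x_n)\to f(x)$ and $y_n\to y$ with $y_n\in\partial_{\mathsf{F}}f(x_n)$, and is $\varnothing$ if $f(x)\in\{\pm\infty\}$. *)

From HB Require Import structures.
From mathcomp Require Import all_boot all_order all_algebra.
From mathcomp Require Import all_classical all_reals all_analysis.
Set Implicit Arguments. Unset Strict Implicit. Unset Printing Implicit Defensive.
Import Order.TTheory GRing.Theory Num.Theory.
Import numFieldNormedType.Exports.
Local Open Scope classical_set_scope.
Local Open Scope ring_scope.

(* A Euclidean space of dimension k is modelled as 'rV[R]_k with the standard
   inner product; the topology is the (product) topology of matrices, which
   coincides with the Euclidean one (finite dimension). *)
Definition dotv (R : realType) (k : nat) (u v : 'rV[R]_k) : R := (u *m v^T) 0 0.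
Definition enorm (R : realType) (k : nat) (u : 'rV[R]_k) : R := Num.sqrt (dotv u u).

Record isometric_group_action (R : realType) (m : nat) := IsoGroupAction {
  gS : Type;
  gmul : gS -> gS -> gS;
  gone : gS;
  ginv : gS -> gS;
  gmulA : forall s t u, gmul s (gmul t u) = gmul (gmul s t) u;
  gmul1 : forall s, gmul gone s = s;
  gmulV : forall s, gmul (ginv s) s = gone;
  gact : gS -> 'rV[R]_m -> 'rV[R]_m;
  gact1 : forall x, gact gone x = x;
  gactM : forall s t x, gact (gmul s t) x = gact s (gact t x);
  gact_linear : forall s (c : R) u v, gact s (c *: u + v) = c *: gact s u + gact s v;
  gact_isometry : forall s u, enorm (gact s u) = enorm u
}.
Arguments gS {R m}.
Arguments gact {R m} _ _ _.

(* Spectral decomposition system (X = 'rV_m, S acting via G, gamma, Lambda_a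
   represented by matrices acting on row vectors: Lambda_a x = x *m Lam a). *)
Definition spectral_decomposition_system (R : realType) (n m : nat)
  (G : isometric_group_action R m) (gamma : 'rV[R]_n -> 'rV[R]_m)
  (A : Type) (Lam : A -> 'M[R]_(m, n)) : Prop :=
  (forall a x, enorm (x *m Lam a) = enorm x) /\
  (exists tau : 'rV[R]_m -> 'rV[R]_m,
      (forall s x, tau (gact G s x) = tau x) /\
      (forall x, exists s, tau x = gact G s x) /\
      (forall a x, gamma (x *m Lam a) = tau x)) /\
  (forall X : 'rV[R]_n, exists a, X = gamma X *m Lam a) /\
  (forall X Y : 'rV[R]_n, dotv X Y <= dotv (gamma X) (gamma Y)).

Definition S_invariant (R : realType) (m : nat) (G : isometric_group_action R m)
  (phi : 'rV[R]_m -> \bar R) : Prop :=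
  forall s x, phi (gact G s x) = phi x.

Definition frechet_subdiff (R : realType) (k : nat) (f : 'rV[R]_k -> \bar R)
  (x : 'rV[R]_k) : set 'rV[R]_k :=
  [set y | f x \is a fin_num /\
     (0 <= limf_einf
        (fun z => (f z - f x - (dotv (z - x) y)%:E) * ((enorm (z - x))^-1)%:E)
        x^')%E].

Definition limiting_subdiff (R : realType) (k : nat) (f : 'rV[R]_k -> \bar R)
  (x : 'rV[R]_k) : set 'rV[R]_k :=
  [set y | f x \is a fin_num /\
     exists (xs ys : nat -> 'rV[R]_k),
       xs @ \oo --> x /\ (f \o xs) @ \oo --> f x /\ ys @ \oo --> y /\
       (forall i, frechet_subdiff f (xs i) (ys i))].

From HB Require Import structures.
From mathcomp Require Import all_boot all_order all_algebra.
From mathcomp Require Import all_classical all_reals all_analysis.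
From mathcomp Require Import ring lra.
Import Order.TTheory GRing.Theory Num.Theory.
Import numFieldNormedType.Exports.
Local Open Scope classical_set_scope.
Local Open Scope ring_scope.

(* Each Lambda_a is an isometry and phi o gamma o Lambda_a = phi, by [A] and
   the S-invariance of phi; this gives the converse implication in (i) at once.
   For the direct one, let Z be close to X = Lambda_a x, put r = |Z - X| and
   v = x + (r/e) y.  Since gamma (Lambda_a v) = tau v lies in the orbit of v,
   [C] yields a point w of the orbit of gamma Z with <Z, Lambda_a v> <= <w, v>;
   moreover |w| = |Z| and phi w = phi (gamma Z).  Expanding squares, this
   inequality gives |w - x| = O(sqrt r) and
     <Z - X, Lambda_a y> - e r <= <w - x, y> - e |w - x|,
   so the Frechet inequality of phi at x, used at w, becomes the one of
   phi o gamma at X.  Part (ii) follows by applying (i) along the approximating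
   sequences, which Lambda_a maps to convergent sequences. *)

Section EuclideanRowVectors.
Context {R : realType} {k : nat}.
Implicit Types (u v w x : 'rV[R]_k) (P : 'rV[R]_k -> Prop).

Lemma dotvE u v : dotv u v = \sum_j u 0 j * v 0 j.
Proof. by rewrite /dotv !mxE; apply: eq_bigr => j _; rewrite mxE. Qed.

Lemma dotvC u v : dotv u v = dotv v u.
Proof. by rewrite !dotvE; apply: eq_bigr => j _; rewrite mulrC. Qed.

Lemma dotv0l v : dotv 0 v = 0.
Proof. by rewrite dotvE big1 // => j _; rewrite mxE mul0r. Qed.

Lemma dotvDl u v w : dotv (u + v) w = dotv u w + dotv v w.
Proof. by rewrite !dotvE -big_split; apply: eq_bigr => j _; rewrite !mxE mulrDl. Qed.

Lemma dotvNl u w : dotv (- u) w = - dotv u w.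
Proof. by rewrite !dotvE -sumrN; apply: eq_bigr => j _; rewrite !mxE mulNr. Qed.

Lemma dotvZl c u w : dotv (c *: u) w = c * dotv u w.
Proof. by rewrite !dotvE mulr_sumr; apply: eq_bigr => j _; rewrite !mxE mulrA. Qed.

Lemma dotvBl u v w : dotv (u - v) w = dotv u w - dotv v w.
Proof. by rewrite dotvDl dotvNl. Qed.

Lemma dotvDr u v w : dotv w (u + v) = dotv w u + dotv w v.
Proof. by rewrite !(dotvC w) dotvDl. Qed.

Lemma dotvBr u v w : dotv w (u - v) = dotv w u - dotv w v.
Proof. by rewrite !(dotvC w) dotvBl. Qed.

Lemma dotvZr c u w : dotv w (c *: u) = c * dotv w u.
Proof. by rewrite !(dotvC w) dotvZl. Qed.

Lemma dotv_sqrD u v : dotv (u + v) (u + v) = dotv u u + 2 * dotv u v + dotv v v.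
Proof. by rewrite dotvDl !dotvDr (dotvC v u); ring. Qed.

Lemma dotv_sqrB u v : dotv (u - v) (u - v) = dotv u u - 2 * dotv u v + dotv v v.
Proof. by rewrite dotvBl !dotvBr (dotvC v u); ring. Qed.

Lemma dotvv_ge0 u : 0 <= dotv u u.
Proof. by rewrite dotvE sumr_ge0 // => j _; rewrite -expr2 sqr_ge0. Qed.

Lemma ler_dotv u v : 2 * dotv u v <= dotv u u + dotv v v.
Proof. by have := dotvv_ge0 (u - v); rewrite dotv_sqrB; lra. Qed.

Lemma ler_dotv_sqrD u v : dotv (u + v) (u + v) <= 2 * dotv u u + 2 * dotv v v.
Proof. by have := ler_dotv u v; rewrite dotv_sqrD; lra. Qed.

Lemma enormK u : enorm u ^+ 2 = dotv u u.
Proof. by rewrite /enorm sqr_sqrtr // dotvv_ge0. Qed.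

Lemma enorm_ge0 u : 0 <= enorm u.
Proof. exact: sqrtr_ge0. Qed.

Lemma enorm0 : enorm (0 : 'rV[R]_k) = 0.
Proof. by rewrite /enorm dotv0l sqrtr0. Qed.

Lemma coord_le_enorm u j : `|u 0 j| <= enorm u.
Proof.
rewrite -sqrtr_sqr /enorm ler_sqrt ?dotvv_ge0 // dotvE (bigD1 j) //= -expr2.
by rewrite lerDl sumr_ge0 // => i _; rewrite -expr2 sqr_ge0.
Qed.

Lemma enorm_gt0 u : u != 0 -> 0 < enorm u.
Proof.
apply: contraNT; rewrite -leNgt => u_le0; apply/eqP/rowP => j; rewrite mxE.
by apply/normr0_eq0/le_anti; rewrite normr_ge0 (le_trans (coord_le_enorm u j)).
Qed.

Lemma mxnorm_le_enorm u : `|u| <= enorm u.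
Proof.
rewrite [leLHS]/Num.Def.normr /= mx_normrE; apply: bigmax_le => [|[i j] _ /=].
  exact: enorm_ge0.
by rewrite (ord1 i) coord_le_enorm.
Qed.

Lemma enorm_le_mxnorm u : enorm u <= k.+1%:R * `|u|.
Proof.
have coord_le_mxnorm j : `|u 0 j| <= `|u|.
  by rewrite [leRHS]/Num.Def.normr /= mx_normrE; apply/bigmax_geP; right; exists (0, j).
rewrite -(ger0_norm (_ : 0 <= k.+1%:R * `|u|)) ?mulr_ge0 //.
rewrite -sqrtr_sqr /enorm ler_sqrt ?sqr_ge0 // dotvE.
apply: (@le_trans _ _ (\sum_(j < k) `|u| ^+ 2)).
  apply: ler_sum => j _; rewrite -expr2 -real_normK ?num_real //.
  by rewrite lerXn2r ?nnegrE.
rewrite sumr_const card_ord -mulr_natl exprMn -natr1.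
by have := normr_ge0 u; have : 0 <= k%:R :> R by []; nra.
Qed.

Lemma nbhs_enormP x P :
  (\forall z \near x, P z) <->
  exists2 d, 0 < d & forall z, enorm (z - x) < d -> P z.
Proof.
split=> [/nbhs_ballP [d d0 dP]|[d d0 dP]].
  exists d => // z zx; apply: dP.
  by rewrite -ball_normE /= distrC (le_lt_trans (mxnorm_le_enorm _)).
apply/nbhs_ballP; exists (d / k.+1%:R) => [|z]; first by rewrite /= divr_gt0.
rewrite -ball_normE /= distrC => zx; apply: dP.
apply: (le_lt_trans (enorm_le_mxnorm _)).
by rewrite -ltr_pdivlMl // mulrC.
Qed.

Lemma cvg_enormP (u : nat -> 'rV[R]_k) x :
  u @ \oo --> x <-> forall d, 0 < d -> \forall i \near \oo, enorm (u i - x) < d.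
Proof.
split=> [ux d d0|ux P /nbhs_enormP [d d0 dP]].
  have : \forall z \near x, enorm (z - x) < d by apply/nbhs_enormP; exists d.
  exact: ux.
by apply: filterS (ux d d0) => i; exact: dP.
Qed.

End EuclideanRowVectors.

Section Isometries.
Context {R : realType} {k l : nat}.

Lemma dotv_isometry (f : 'rV[R]_k -> 'rV[R]_l) :
  (forall u v, f (u + v) = f u + f v) -> (forall u, enorm (f u) = enorm u) ->
  forall u v, dotv (f u) (f v) = dotv u v.
Proof.
move=> fD fN u v; have fsqr w : dotv (f w) (f w) = dotv w w by rewrite -!enormK fN.
by have := fsqr (u + v); rewrite fD !dotv_sqrD !fsqr; lra.
Qed.

Lemma cvg_mulmx_isometry (M : 'M[R]_(k, l)) (u : nat -> 'rV[R]_k) (x : 'rV[R]_k) :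
  (forall v, enorm (v *m M) = enorm v) ->
  u @ \oo --> x -> (fun i => u i *m M) @ \oo --> x *m M.
Proof.
move=> MN /cvg_enormP ux; apply/cvg_enormP => d /ux.
by apply: filterS => i; rewrite -mulmxBl MN.
Qed.

End Isometries.

Lemma limf_einf_ge0P {R : realType} {T : choiceType} {X : filteredType T}
    {F : set_system X} {FF : Filter F} (q : X -> \bar R) :
  (0 <= limf_einf q F)%E <-> forall e : R, 0 < e -> F [set z | ((- e)%:E <= q z)%E].
Proof.
rewrite limf_einfE; split=> [q_ge0 e e0|qF].
  have /ereal_sup_gt [_ [V FV <-] Vq] :
      ((- e)%:E < ereal_sup [set ereal_inf (q @` V) | V in F])%E.
    by apply: lt_le_trans q_ge0; rewrite lte_fin oppr_lt0.
  apply: filterS FV => z Vz /=; apply/ltW/(lt_le_trans Vq).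
  by apply: ereal_inf_lbound; exists z.
apply/lee_subgt0Pr => e e0; rewrite sub0e.
apply: le_trans (ereal_sup_ubound _); last first.
  by exists [set z | ((- e)%:E <= q z)%E]; first exact: qF.
by apply: le_ereal_inf_tmp => _ [z qz <-].
Qed.

Lemma lee_slopeP {R : realType} {fz : \bar R} {fx c e r : R} : 0 < r ->
  ((- e)%:E <= (fz - fx%:E - c%:E) * (r^-1)%:E)%E <-> ((fx + c - e * r)%:E <= fz)%E.
Proof.
move=> r0; have r'0 : 0 < r^-1 by rewrite invr_gt0.
case: fz => [t| |] /=.
- by rewrite -!EFinB -EFinM !lee_fin ler_pdivlMr //; split; nra.
- by rewrite gt0_mulye ?lte_fin // !leey.
- by rewrite gt0_mulNye ?lte_fin.
Qed.

Lemma frechet_subdiffP {R : realType} {k : nat} (f : 'rV[R]_k -> \bar R) x y :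
  frechet_subdiff f x y <-> f x \is a fin_num /\
   forall e, 0 < e -> exists2 d, 0 < d & forall z, enorm (z - x) < d ->
     ((fine (f x) + dotv (z - x) y - e * enorm (z - x))%:E <= f z)%E.
Proof.
have zx_gt0 z : z != x -> 0 < enorm (z - x) by rewrite -subr_eq0; exact: enorm_gt0.
rewrite /frechet_subdiff /=; split=> -[fx_fin fxP]; split=> //.
  move=> e e0; have [d d0 dP] := (nbhs_enormP _ _).1 ((limf_einf_ge0P _).1 fxP e e0).
  exists d => // z zx; have [->|zx'] := eqVneq z x.
    by rewrite subrr dotv0l enorm0 mulr0 addr0 subr0 fineK.
  by apply/(lee_slopeP (zx_gt0 _ zx')); rewrite fineK //; exact: dP.
apply/limf_einf_ge0P => e e0; have [d d0 dP] := fxP e e0.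
apply/nbhs_enormP; exists d => // z zx /zx_gt0 r0 /=.
by rewrite -[f x]fineK //; apply/(lee_slopeP r0); exact: dP.
Qed.

Section OrbitPointEstimates.
Context {R : realType} {n m : nat}.
Implicit Types (X Y Z : 'rV[R]_n) (x y w : 'rV[R]_m).

Lemma orbit_point_estimate {X Y Z x y w} {e : R} :
  0 < e -> dotv X X = dotv x x -> dotv X Y = dotv x y -> dotv w w = dotv Z Z ->
  0 < enorm (Z - X) ->
  dotv Z (X + (enorm (Z - X) / e) *: Y) <= dotv w (x + (enorm (Z - X) / e) *: y) ->
  dotv (Z - X) Y - e * enorm (Z - X) <= dotv (w - x) y - e * enorm (w - x) /\
  e * enorm (w - x) ^+ 2 <= e * enorm (Z - X) ^+ 2 + 2 * enorm (Z - X) * (dotv w y - dotv Z Y).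
Proof.
move=> e0 XX XY wZ; set r := enorm (Z - X); set s := enorm (w - x) => r0.
have er c : e * (r / e * c) = r * c by rewrite mulrA mulrCA divff ?mulr1 ?gt_eqF.
rewrite !dotvDr !dotvZr => le_rw.
have le_w : e * dotv Z X + r * dotv Z Y <= e * dotv w x + r * dotv w y.
  by move: le_rw; rewrite -(ler_pM2l e0) !mulrDr !er.
have r2 : r ^+ 2 = dotv Z Z - 2 * dotv Z X + dotv x x by rewrite enormK dotv_sqrB XX.
have s2 : s ^+ 2 = dotv Z Z - 2 * dotv w x + dotv x x by rewrite enormK dotv_sqrB wZ.
split; last by rewrite r2 s2; lra.
have : r * (dotv Z Y - dotv w y) <= r * (e * (r - s)).
  (* le_w bounds the left side by e (r^2 - s^2) / 2, and (r - s)^2 >= 0. *)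
  by have := mulr_ge0 (ltW e0) (sqr_ge0 (r - s)); nra.
by rewrite ler_pM2l // !dotvBl XY; lra.
Qed.

Lemma dotv_gap_le X {Y Z y w} :
  dotv Y Y = dotv y y -> dotv w w = dotv Z Z ->
  dotv w y - dotv Z Y <= 2 * dotv (Z - X) (Z - X) + 2 * dotv X X + dotv y y.
Proof.
move=> YY wZ; have := ler_dotv w y; have := dotvv_ge0 (Z + Y).
have := ler_dotv_sqrD (Z - X) X; rewrite subrK (dotv_sqrD Z Y); lra.
Qed.

End OrbitPointEstimates.

Section SpectralDecompositionSystem.
Context {R : realType} {n m : nat} {G : isometric_group_action R m}
  {gamma : 'rV[R]_n -> 'rV[R]_m} {A : Type} {Lam : A -> 'M[R]_(m, n)}.
Hypothesis sds : spectral_decomposition_system G gamma Lam.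

Lemma enorm_Lam a (u : 'rV[R]_m) : enorm (u *m Lam a) = enorm u.
Proof. by case: sds => ->. Qed.

Lemma dotv_Lam a (u v : 'rV[R]_m) : dotv (u *m Lam a) (v *m Lam a) = dotv u v.
Proof.
by apply: (dotv_isometry (fun w => w *m Lam a)) => [{}u {}v|{}u]; rewrite ?mulmxDl ?enorm_Lam.
Qed.

Lemma dotv_gact s (u v : 'rV[R]_m) : dotv (gact G s u) (gact G s v) = dotv u v.
Proof.
apply: (dotv_isometry (gact G s)) => [{}u {}v|]; last exact: gact_isometry.
by have := gact_linear s 1 u v; rewrite !scale1r.
Qed.

Lemma gactVK s (u : 'rV[R]_m) : gact G (ginv s) (gact G s u) = u.
Proof. by rewrite -gactM gmulV gact1. Qed.

Lemma dotv_gamma (Z : 'rV[R]_n) : dotv (gamma Z) (gamma Z) = dotv Z Z.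
Proof. by case: sds => _ [_ [decomp _]]; have [a {3 4}->] := decomp Z; rewrite dotv_Lam. Qed.

Lemma S_invariant_gamma_Lam phi : S_invariant G phi ->
  forall a v, phi (gamma (v *m Lam a)) = phi v.
Proof.
move=> phi_inv a v; case: sds => _ [[tau [_ [tau_orbit gamma_Lam]]] _].
by rewrite gamma_Lam; have [s ->] := tau_orbit v; exact: phi_inv.
Qed.

Lemma dotv_Lam_le_orbit a (Z : 'rV[R]_n) (v : 'rV[R]_m) :
  exists s, dotv Z (v *m Lam a) <= dotv (gact G s (gamma Z)) v.
Proof.
case: sds => _ [[tau [_ [tau_orbit gamma_Lam]]] [_ gamma_dot]].
have [s tau_v] := tau_orbit v; exists (ginv s).
rewrite -[v in leRHS](gactVK s) dotv_gact -tau_v -(gamma_Lam a).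
exact: gamma_dot.
Qed.

Context {phi : 'rV[R]_m -> \bar R} (phi_inv : S_invariant G phi).

Lemma frechet_subdiff_of_gamma_Lam a x y :
  frechet_subdiff (phi \o gamma) (x *m Lam a) (y *m Lam a) ->
  frechet_subdiff phi x y.
Proof.
move=> /frechet_subdiffP []; rewrite /= S_invariant_gamma_Lam // => fx_fin fxP.
apply/frechet_subdiffP; split=> // e /fxP [d d0 dP]; exists d => // z zx.
have := dP (z *m Lam a); rewrite /= S_invariant_gamma_Lam // -mulmxBl.
by rewrite enorm_Lam dotv_Lam; apply.
Qed.

Lemma frechet_subdiff_gamma_Lam a x y :
  frechet_subdiff phi x y ->
  frechet_subdiff (phi \o gamma) (x *m Lam a) (y *m Lam a).
Proof.
move=> /frechet_subdiffP [fx_fin fxP]; apply/frechet_subdiffP.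
rewrite /= S_invariant_gamma_Lam //; split=> // e e0; have [d d0 dP] := fxP e e0.
set X := x *m Lam a; set Y := y *m Lam a; set K := 2 + 2 * dotv x x + dotv y y.
have K0 : 0 < K by have := dotvv_ge0 x; have := dotvv_ge0 y; rewrite /K; lra.
have eK0 : 0 < e + 2 * K by lra.
(* K bounds <w, y> - <Z, Y> once r < 1, so that e |w - x|^2 <= r (e + 2 K) < e d^2. *)
exists (Num.min 1 (e * d ^+ 2 / (e + 2 * K))) => [|Z].
  by rewrite lt_min ltr01 /= divr_gt0 // mulr_gt0 // exprn_gt0.
rewrite lt_min => /andP[r_lt1 r_small]; have [->|ZX] := eqVneq Z X.
  by rewrite subrr dotv0l enorm0 mulr0 addr0 subr0 /= S_invariant_gamma_Lam // fineK.
have r0 : 0 < enorm (Z - X) by rewrite enorm_gt0 // subr_eq0.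
set r := enorm (Z - X) in r_lt1 r_small r0 *.
have [s] := dotv_Lam_le_orbit a Z (x + (r / e) *: y).
set w := gact G s (gamma Z); rewrite mulmxDl -scalemxAl => Zw.
have wZ : dotv w w = dotv Z Z by rewrite dotv_gact dotv_gamma.
have [gap_le wx_sqr] := orbit_point_estimate e0 (dotv_Lam a x x) (dotv_Lam a x y) wZ r0 Zw.
rewrite -/X -/Y -/r in gap_le wx_sqr.
have gap_leK : dotv w y - dotv Z Y <= K.
  have := dotv_gap_le X (dotv_Lam a y y) wZ.
  by rewrite -enormK -/r (dotv_Lam a x x) /K; nra.
have wx_lt_d : enorm (w - x) < d.
  rewrite -(ltr_pXn2r (n := 2)) ?nnegrE ?enorm_ge0 ?(ltW d0) // -(ltr_pM2l e0).
  have r_gapK : r * (dotv w y - dotv Z Y) <= r * K by rewrite ler_pM2l.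
  have er2 : e * r ^+ 2 <= e * r by rewrite ler_pM2l // expr2 ler_piMr ?ltW.
  by rewrite ltr_pdivlMr // in r_small; lra.
have := dP w wx_lt_d; rewrite phi_inv => /(le_trans _); apply.
by rewrite lee_fin; lra.
Qed.

Lemma limiting_subdiff_gamma_Lam a x y :
  limiting_subdiff phi x y ->
  limiting_subdiff (phi \o gamma) (x *m Lam a) (y *m Lam a).
Proof.
move=> [fx_fin [xs [ys [xs_x [phi_xs [ys_y xs_ys]]]]]].
rewrite /limiting_subdiff /= S_invariant_gamma_Lam //; split=> //.
exists (fun i => xs i *m Lam a), (fun i => ys i *m Lam a).
have -> : (phi \o gamma) \o (fun i => xs i *m Lam a) = phi \o xs.
  by apply/funext => i /=; rewrite S_invariant_gamma_Lam.
split; first exact: cvg_mulmx_isometry (enorm_Lam a) xs_x.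
split=> //; split; first exact: cvg_mulmx_isometry (enorm_Lam a) ys_y.
by move=> i; apply: frechet_subdiff_gamma_Lam.
Qed.

End SpectralDecompositionSystem.

Theorem proposition4p6 (R : realType) (n m : nat)
  (G : isometric_group_action R m) (gamma : 'rV[R]_n -> 'rV[R]_m)
  (A : Type) (Lam : A -> 'M[R]_(m, n))
  (Hsds : spectral_decomposition_system G gamma Lam)
  (Hclosed : closed (range Lam))
  (phi : 'rV[R]_m -> \bar R) (Hinv : S_invariant G phi)
  (x y : 'rV[R]_m) (a : A) :
  (frechet_subdiff phi x y <->
     frechet_subdiff (phi \o gamma) (x *m Lam a) (y *m Lam a)) /\
  (limiting_subdiff phi x y ->
     limiting_subdiff (phi \o gamma) (x *m Lam a) (y *m Lam a)).
Proof.
split; last exact: (limiting_subdiff_gamma_Lam Hsds Hinv).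
split; first exact: (frechet_subdiff_gamma_Lam Hsds Hinv).
exact: (frechet_subdiff_of_gamma_Lam Hsds Hinv).
Qed.
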